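(* Let $\mathbb E$ be a stiffly Mal'tsev category. Then (1) every object of $\mathbb E$ carrying an internal Mal'tsev structure is a subobject of $1$ (i.e. $X\to 1$ is a monomorphism); (2) every object of $\mathbb E$ carrying an internal group structure is isomorphic to $1$.
   Context: A finitely complete category is Mal'tsev if every internal reflexive relation is an equivalence relation. A pointed finitely complete category is unital if for all $X,Y$ the morphisms $(1_X,0):X\to X\times Y$ and $(0,1_Y):Y\to X\times Y$ are jointly strongly epic. In a unital category two subobjects $u:U\to X$, $v:V\to X$ commute if there exists a (necessarily unique) $\varphi:U\times V\to X$ with $\varphi\circ(1_U,0)=u$ and $\varphi\circ(0,1_V)=v$; a unital category is stiffly unital if whenever $u,v$ commute, $u\cap v$ is the zero subobject. For an object $Y$, $Pt_Y\mathbb E$ is the pointed category of split epimorphisms $f:A\to Y$ with chosen section $s$ ($fs=1_Y$), morphisms commuting with $f$'s and $s$'s; for $\mathbb E$ Mal'tsev each $Pt_Y\mathbb E$ is unital. $\mathbb E$ is stiffly Mal'tsev if it is Mal'tsev and every fiber $Pt_Y\mathbb E$ is stiffly unital. An internal Mal'tsev structure on $X$ is $p:X^3\to X$ with $p(x,y,y)=x=p(y,y,x)$. *)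

From Stdlib Require Import ProofIrrelevance.


Record Cat := mkCat {
  Ob : Type;
  Hom : Ob -> Ob -> Type;
  idm : forall X, Hom X X;
  comp : forall X Y Z, Hom Y Z -> Hom X Y -> Hom X Z;
  comp_assoc : forall X Y Z W (h : Hom Z W) (g : Hom Y Z) (f : Hom X Y),
      comp X Z W h (comp X Y Z g f) = comp X Y W (comp Y Z W h g) f;
  comp_id_l : forall X Y (f : Hom X Y), comp X Y Y (idm Y) f = f;
  comp_id_r : forall X Y (f : Hom X Y), comp X X Y f (idm X) = f }.

Arguments Hom {c} _ _.
Arguments idm {c} _.
Arguments comp {c X Y Z} _ _.

Notation "g ∘ f" := (comp g f) (at level 40, left associativity).

Section Generic.
Context {C : Cat}.

Definition is_mono {A B : Ob C} (m : Hom A B) : Prop :=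
  forall T (x y : Hom T A), m ∘ x = m ∘ y -> x = y.

Definition is_iso {A B : Ob C} (f : Hom A B) : Prop :=
  exists g : Hom B A, g ∘ f = idm A /\ f ∘ g = idm B.

Definition is_terminal (T : Ob C) : Prop :=
  forall X, exists f : Hom X T, forall g : Hom X T, g = f.

Definition is_initial (I : Ob C) : Prop :=
  forall X, exists f : Hom I X, forall g : Hom I X, g = f.

Definition is_zero_obj (Z : Ob C) : Prop := is_terminal Z /\ is_initial Z.

Definition is_zero_map {A B : Ob C} (f : Hom A B) : Prop :=
  exists (Z : Ob C) (a : Hom A Z) (b : Hom Z B), is_zero_obj Z /\ f = b ∘ a.

Definition is_product (X Y P : Ob C) (p1 : Hom P X) (p2 : Hom P Y) : Prop :=
  forall T (f : Hom T X) (g : Hom T Y),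
    exists h : Hom T P, p1 ∘ h = f /\ p2 ∘ h = g /\
      forall h' : Hom T P, p1 ∘ h' = f -> p2 ∘ h' = g -> h' = h.

Definition is_equalizer {X Y E : Ob C} (f g : Hom X Y) (e : Hom E X) : Prop :=
  f ∘ e = g ∘ e /\
  forall T (h : Hom T X), f ∘ h = g ∘ h ->
    exists k : Hom T E, e ∘ k = h /\ forall k' : Hom T E, e ∘ k' = h -> k' = k.

Definition is_pullback {X Y Z P : Ob C} (f : Hom X Z) (g : Hom Y Z)
    (a : Hom P X) (b : Hom P Y) : Prop :=
  f ∘ a = g ∘ b /\
  forall T (x : Hom T X) (y : Hom T Y), f ∘ x = g ∘ y ->
    exists h : Hom T P, a ∘ h = x /\ b ∘ h = y /\
      forall h' : Hom T P, a ∘ h' = x -> b ∘ h' = y -> h' = h.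

End Generic.

Definition finitely_complete (C : Cat) : Prop :=
  (exists T : Ob C, is_terminal T) /\
  (forall X Y : Ob C, exists P (p1 : Hom P X) (p2 : Hom P Y), is_product X Y P p1 p2) /\
  (forall (X Y : Ob C) (f g : Hom X Y), exists E (e : Hom E X), is_equalizer f g e).

Definition pointed (C : Cat) : Prop := exists Z : Ob C, is_zero_obj Z.

Definition jointly_strongly_epic {C : Cat} {A B D : Ob C}
    (f : Hom A D) (g : Hom B D) : Prop :=
  (forall W (h k : Hom D W), h ∘ f = k ∘ f -> h ∘ g = k ∘ g -> h = k) /\
  (forall M N (m : Hom M N) (u : Hom D N) (a : Hom A M) (b : Hom B M),
      is_mono m -> m ∘ a = u ∘ f -> m ∘ b = u ∘ g ->
      exists d : Hom D M, m ∘ d = u /\ d ∘ f = a /\ d ∘ g = b).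

Definition is_inj1 {C : Cat} {X Y P : Ob C} (p1 : Hom P X) (p2 : Hom P Y)
    (i : Hom X P) : Prop := p1 ∘ i = idm X /\ is_zero_map (p2 ∘ i).
Definition is_inj2 {C : Cat} {X Y P : Ob C} (p1 : Hom P X) (p2 : Hom P Y)
    (i : Hom Y P) : Prop := is_zero_map (p1 ∘ i) /\ p2 ∘ i = idm Y.

Definition unital (C : Cat) : Prop :=
  finitely_complete C /\ pointed C /\
  forall (X Y P : Ob C) (p1 : Hom P X) (p2 : Hom P Y) (i1 : Hom X P) (i2 : Hom Y P),
    is_product X Y P p1 p2 -> is_inj1 p1 p2 i1 -> is_inj2 p1 p2 i2 ->
    jointly_strongly_epic i1 i2.

Definition commute {C : Cat} {U V X : Ob C} (u : Hom U X) (v : Hom V X) : Prop :=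
  exists (P : Ob C) (p1 : Hom P U) (p2 : Hom P V) (i1 : Hom U P) (i2 : Hom V P)
         (phi : Hom P X),
    is_product U V P p1 p2 /\ is_inj1 p1 p2 i1 /\ is_inj2 p1 p2 i2 /\
    phi ∘ i1 = u /\ phi ∘ i2 = v.

Definition stiffly_unital (C : Cat) : Prop :=
  unital C /\
  forall (U V X : Ob C) (u : Hom U X) (v : Hom V X),
    is_mono u -> is_mono v -> commute u v ->
    forall (W : Ob C) (a : Hom W U) (b : Hom W V), is_pullback u v a b -> is_zero_obj W.

Definition is_relation {C : Cat} {R X : Ob C} (r1 r2 : Hom R X) : Prop :=
  forall T (s t : Hom T R), r1 ∘ s = r1 ∘ t -> r2 ∘ s = r2 ∘ t -> s = t.

Definition rel_reflexive {C : Cat} {R X : Ob C} (r1 r2 : Hom R X) : Prop :=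
  exists d : Hom X R, r1 ∘ d = idm X /\ r2 ∘ d = idm X.

Definition rel_symmetric {C : Cat} {R X : Ob C} (r1 r2 : Hom R X) : Prop :=
  exists s : Hom R R, r1 ∘ s = r2 /\ r2 ∘ s = r1.

Definition rel_transitive {C : Cat} {R X : Ob C} (r1 r2 : Hom R X) : Prop :=
  forall (P : Ob C) (a b : Hom P R), is_pullback r2 r1 a b ->
    exists t : Hom P R, r1 ∘ t = r1 ∘ a /\ r2 ∘ t = r2 ∘ b.

Definition Maltsev (C : Cat) : Prop :=
  finitely_complete C /\
  forall (R X : Ob C) (r1 r2 : Hom R X),
    is_relation r1 r2 -> rel_reflexive r1 r2 ->
    rel_reflexive r1 r2 /\ rel_symmetric r1 r2 /\ rel_transitive r1 r2.

Record PtOb (E : Cat) (Y : Ob E) := mkPtOb {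
  pt_dom : Ob E;
  pt_f : Hom pt_dom Y;
  pt_s : Hom Y pt_dom;
  pt_fs : pt_f ∘ pt_s = idm Y }.
Arguments pt_dom {E Y} _.
Arguments pt_f {E Y} _.
Arguments pt_s {E Y} _.

Definition PtHom (E : Cat) (Y : Ob E) (A B : PtOb E Y) : Type :=
  { h : Hom (pt_dom A) (pt_dom B) | pt_f B ∘ h = pt_f A /\ h ∘ pt_s A = pt_s B }.

Definition Pt_id (E : Cat) (Y : Ob E) (A : PtOb E Y) : PtHom E Y A A.
Proof.
  exists (idm (pt_dom A)); split; [apply comp_id_r | apply comp_id_l].
Defined.

Definition Pt_comp (E : Cat) (Y : Ob E) (A B D : PtOb E Y)
    (h : PtHom E Y B D) (k : PtHom E Y A B) : PtHom E Y A D.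
Proof.
  destruct h as [h [Hh1 Hh2]], k as [k [Hk1 Hk2]].
  exists (h ∘ k); split.
  - rewrite comp_assoc, Hh1; exact Hk1.
  - rewrite <- comp_assoc, Hk2; exact Hh2.
Defined.

Lemma PtHom_eq (E : Cat) (Y : Ob E) (A B : PtOb E Y) (h k : PtHom E Y A B) :
  proj1_sig h = proj1_sig k -> h = k.
Proof.
  destruct h as [h Hh], k as [k Hk]; simpl; intros ->.
  f_equal; apply proof_irrelevance.
Qed.

Definition Pt (E : Cat) (Y : Ob E) : Cat.
Proof.
  refine (@mkCat (PtOb E Y) (@PtHom E Y) (@Pt_id E Y) (@Pt_comp E Y) _ _ _).
  - intros X1 X2 X3 X4 [h ?] [g ?] [f ?]; apply PtHom_eq; simpl.
    destruct a, a0, a1; simpl. apply comp_assoc.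
  - intros X1 X2 [f [? ?]]; apply PtHom_eq; simpl. apply comp_id_l.
  - intros X1 X2 [f [? ?]]; apply PtHom_eq; simpl. apply comp_id_r.
Defined.

Definition stiffly_Maltsev (E : Cat) : Prop :=
  Maltsev E /\ forall Y : Ob E, stiffly_unital (Pt E Y).

Record ProdCat := mkProdCat {
  pc_cat :> Cat;
  one : Ob pc_cat;
  bang : forall X : Ob pc_cat, Hom X one;
  bang_uniq : forall X (f : Hom X one), f = bang X;
  prod : Ob pc_cat -> Ob pc_cat -> Ob pc_cat;
  pr1 : forall X Y, Hom (prod X Y) X;
  pr2 : forall X Y, Hom (prod X Y) Y;
  pair : forall T X Y, Hom T X -> Hom T Y -> Hom T (prod X Y);
  pr1_pair : forall T X Y (f : Hom T X) (g : Hom T Y), pr1 X Y ∘ pair T X Y f g = f;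
  pr2_pair : forall T X Y (f : Hom T X) (g : Hom T Y), pr2 X Y ∘ pair T X Y f g = g;
  pair_uniq : forall T X Y (h : Hom T (prod X Y)),
      h = pair T X Y (pr1 X Y ∘ h) (pr2 X Y ∘ h) }.

Arguments one {p}.
Arguments pr1 {p} X Y.
Arguments pr2 {p} X Y.
Arguments bang {p} X.
Arguments prod {p} X Y.
Arguments pair {p T X Y} _ _.

(* internal Mal'tsev structure p : X^3 = X x (X x X) -> X, with
   p(x,y,y) = x = p(y,y,x), expressed on generalized elements *)
Definition maltsev_structure {E : ProdCat} (X : Ob E)
    (p : Hom (prod X (prod X X)) X) : Prop :=
  forall T (x y : Hom T X),
    p ∘ pair x (pair y y) = x /\ p ∘ pair y (pair y x) = x.

Definition group_structure {E : ProdCat} (X : Ob E)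
    (m : Hom (prod X X) X) (e : Hom one X) (i : Hom X X) : Prop :=
  forall T (a b c : Hom T X),
    m ∘ pair (m ∘ pair a b) c = m ∘ pair a (m ∘ pair b c) /\
    m ∘ pair (e ∘ bang T) a = a /\ m ∘ pair a (e ∘ bang T) = a /\
    m ∘ pair (i ∘ a) a = e ∘ bang T /\ m ∘ pair a (i ∘ a) = e ∘ bang T.

(* In the fibre Pt_X(E), consider the point A = (pr1 : X×X -> X, diagonal).
   Its square in the fibre is X×X×X over the first projection, and an internal
   Mal'tsev operation p gives a map (x, y, z) |-> (x, p(y, x, z)) restricting to
   the identity on both summands, so 1_A commutes with itself.  Stiffness forces
   A ∩ A = A to be the zero object (X, 1, 1), hence the diagonal is invertible,
   the two projections X×X -> X coincide and X -> 1 is monic.  A group carries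
   the Mal'tsev operation x y⁻¹ z, and its unit splits X -> 1, which is then an
   isomorphism. *)

Lemma comp_assocr (C : Cat) (X Y Z W : Ob C) (h : Hom Z W) (g : Hom Y Z) (f : Hom X Y) :
  (h ∘ g) ∘ f = h ∘ (g ∘ f).
Proof. symmetry; apply comp_assoc. Qed.

Lemma id_mono (C : Cat) (A : Ob C) : is_mono (idm A).
Proof. intros T x y H; rewrite !comp_id_l in H; exact H. Qed.

Lemma id_pullback (C : Cat) (A : Ob C) : is_pullback (idm A) (idm A) (idm A) (idm A).
Proof.
  split; [reflexivity|].
  intros T x y H; rewrite !comp_id_l in H; subst y.
  exists x; rewrite !comp_id_l; repeat split.
  intros h' H1 _; rewrite comp_id_l in H1; exact H1.
Qed.

Lemma mono_split_epi_iso (C : Cat) (A B : Ob C) (f : Hom A B) (s : Hom B A) :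
  is_mono f -> f ∘ s = idm B -> is_iso f.
Proof.
  intros Hf Hfs; exists s; split; [|exact Hfs].
  apply Hf; rewrite comp_assoc, Hfs, comp_id_l, comp_id_r; reflexivity.
Qed.

Lemma zero_obj_endo_id (C : Cat) (Z : Ob C) (f : Hom Z Z) : is_zero_obj Z -> f = idm Z.
Proof.
  intros [_ Hini]; destruct (Hini Z) as [g Hg].
  rewrite (Hg f), (Hg (idm Z)); reflexivity.
Qed.

(* In a stiffly unital category an object whose identity commutes with itself
   is its own intersection with itself, hence zero. *)
Lemma stiffly_unital_self_commute_zero (C : Cat) (A : Ob C) :
  stiffly_unital C -> commute (idm A) (idm A) -> is_zero_obj A.
Proof.
  intros [_ Hstiff] Hcomm.
  exact (Hstiff A A A _ _ (id_mono C A) (id_mono C A) Hcomm A _ _ (id_pullback C A)).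
Qed.

Section Products.
Variable E : ProdCat.

Lemma pair_comp (S T X Y : Ob E) (f : Hom T X) (g : Hom T Y) (k : Hom S T) :
  pair f g ∘ k = pair (f ∘ k) (g ∘ k).
Proof.
  rewrite (pair_uniq E _ _ _ (pair f g ∘ k)), !comp_assoc, pr1_pair, pr2_pair.
  reflexivity.
Qed.

Lemma pr1_pair_comp (S T X Y : Ob E) (f : Hom T X) (g : Hom T Y) (k : Hom S T) :
  pr1 X Y ∘ (pair f g ∘ k) = f ∘ k.
Proof. rewrite comp_assoc, pr1_pair; reflexivity. Qed.

Lemma pr2_pair_comp (S T X Y : Ob E) (f : Hom T X) (g : Hom T Y) (k : Hom S T) :
  pr2 X Y ∘ (pair f g ∘ k) = g ∘ k.
Proof. rewrite comp_assoc, pr2_pair; reflexivity. Qed.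

Lemma prod_ext (T X Y : Ob E) (a b : Hom T (prod X Y)) :
  pr1 X Y ∘ a = pr1 X Y ∘ b -> pr2 X Y ∘ a = pr2 X Y ∘ b -> a = b.
Proof.
  intros H1 H2; rewrite (pair_uniq E _ _ _ a), (pair_uniq E _ _ _ b), H1, H2.
  reflexivity.
Qed.

Lemma bang_mono_of_pr1_eq_pr2 (X : Ob E) : pr1 X X = pr2 X X -> is_mono (bang X).
Proof.
  intros Hpr T x y _.
  rewrite <- (pr1_pair E _ _ _ x y), Hpr, pr2_pair; reflexivity.
Qed.

Lemma bang_iso_of_mono (X : Ob E) (e : Hom one X) : is_mono (bang X) -> is_iso (bang X).
Proof.
  intros Hm; apply (mono_split_epi_iso _ _ _ _ e Hm).
  rewrite (bang_uniq E _ (bang X ∘ e)); symmetry; apply bang_uniq.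
Qed.

End Products.

Global Hint Rewrite comp_assocr pair_comp pr1_pair pr2_pair pr1_pair_comp pr2_pair_comp
  comp_id_l comp_id_r : prodcat.
Ltac prodcat := autorewrite with prodcat.

Lemma Pt_comp_val (E : Cat) (Y : Ob E) (A B D : PtOb E Y)
  (h : PtHom E Y B D) (k : PtHom E Y A B) :
  proj1_sig (@comp (Pt E Y) A B D h k) = proj1_sig h ∘ proj1_sig k.
Proof. destruct h as [h [? ?]], k as [k [? ?]]; reflexivity. Qed.

Section PointsOver.
Variable E : ProdCat.
Variable X : Ob E.

Definition mkPtHom (B D : PtOb E X) (v : Hom (pt_dom B) (pt_dom D))
  (H1 : pt_f D ∘ v = pt_f B) (H2 : v ∘ pt_s B = pt_s D) : PtHom E X B D :=
  exist _ v (conj H1 H2).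

Definition pt_base : PtOb E X := mkPtOb E X X (idm X) (idm X) (comp_id_l _ _ _ _).

Lemma pt_base_zero : is_zero_obj (C := Pt E X) pt_base.
Proof.
  split; intros B.
  - exists (mkPtHom B pt_base (pt_f B) (comp_id_l _ _ _ _) (pt_fs _ _ B)).
    intros [g [H1 H2]]; apply PtHom_eq; simpl in *; rewrite comp_id_l in H1; exact H1.
  - exists (mkPtHom pt_base B (pt_s B) (pt_fs _ _ B) (comp_id_r _ _ _ _)).
    intros [g [H1 H2]]; apply PtHom_eq; simpl in *; rewrite comp_id_r in H2; exact H2.
Qed.

Lemma pt_zero_map (B D : PtOb E X) (h : PtHom E X B D) :
  proj1_sig h = pt_s D ∘ pt_f B -> is_zero_map (C := Pt E X) h.
Proof.
  intros H; exists pt_base,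
    (mkPtHom B pt_base (pt_f B) (comp_id_l _ _ _ _) (pt_fs _ _ B)),
    (mkPtHom pt_base D (pt_s D) (pt_fs _ _ D) (comp_id_r _ _ _ _)).
  split; [exact pt_base_zero | apply PtHom_eq; exact H].
Qed.

Definition pt_pair : PtOb E X :=
  mkPtOb E X (prod X X) (pr1 X X) (pair (idm X) (idm X)) (pr1_pair E _ _ _ _ _).

(* The square of [pt_pair] in Pt_X(E): (x, y, z) projects to (x, y) and (x, z). *)
Definition pt_triple : PtOb E X :=
  mkPtOb E X (prod X (prod X X)) (pr1 X (prod X X))
    (pair (idm X) (pair (idm X) (idm X))) (pr1_pair E _ _ _ _ _).

Ltac pt_hom := simpl; prodcat; try reflexivity.

Definition triple_pr1 : PtHom E X pt_triple pt_pair.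
Proof. refine (mkPtHom pt_triple pt_pair (pair (pr1 _ _) (pr1 _ _ ∘ pr2 _ _)) _ _); pt_hom. Defined.
Definition triple_pr2 : PtHom E X pt_triple pt_pair.
Proof. refine (mkPtHom pt_triple pt_pair (pair (pr1 _ _) (pr2 _ _ ∘ pr2 _ _)) _ _); pt_hom. Defined.
Definition triple_in1 : PtHom E X pt_pair pt_triple.
Proof. refine (mkPtHom pt_pair pt_triple (pair (pr1 _ _) (pair (pr2 _ _) (pr1 _ _))) _ _); pt_hom. Defined.
Definition triple_in2 : PtHom E X pt_pair pt_triple.
Proof. refine (mkPtHom pt_pair pt_triple (pair (pr1 _ _) (pair (pr1 _ _) (pr2 _ _))) _ _); pt_hom. Defined.

Lemma triple_is_product : is_product (C := Pt E X) pt_pair pt_pair pt_triple triple_pr1 triple_pr2.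
Proof.
  intros T [f [Hf1 Hf2]] [g [Hg1 Hg2]]; simpl in *.
  unshelve eexists.
  { refine (mkPtHom T pt_triple (pair (pt_f T) (pair (pr2 _ _ ∘ f) (pr2 _ _ ∘ g))) _ _);
      pt_hom.
    rewrite Hf2, Hg2, pt_fs; prodcat; reflexivity. }
  split; [|split].
  - apply PtHom_eq; simpl; prodcat; apply prod_ext; prodcat; auto.
  - apply PtHom_eq; simpl; prodcat; apply prod_ext; prodcat; auto.
  - intros [h [Hh1 Hh2]] Ha Hb; apply (f_equal (@proj1_sig _ _)) in Ha, Hb; simpl in *.
    apply PtHom_eq; simpl.
    apply prod_ext; prodcat; [exact Hh1|].
    apply prod_ext; prodcat; [rewrite <- Ha | rewrite <- Hb]; prodcat; reflexivity.
Qed.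

Lemma triple_is_inj1 : is_inj1 (C := Pt E X) triple_pr1 triple_pr2 triple_in1.
Proof.
  split.
  - apply PtHom_eq; simpl; prodcat; apply prod_ext; prodcat; reflexivity.
  - apply pt_zero_map; rewrite Pt_comp_val; simpl; prodcat; reflexivity.
Qed.

Lemma triple_is_inj2 : is_inj2 (C := Pt E X) triple_pr1 triple_pr2 triple_in2.
Proof.
  split.
  - apply pt_zero_map; rewrite Pt_comp_val; simpl; prodcat; reflexivity.
  - apply PtHom_eq; simpl; prodcat; apply prod_ext; prodcat; reflexivity.
Qed.

Lemma pt_pair_zero_pr1_eq_pr2 : is_zero_obj (C := Pt E X) pt_pair -> pr1 X X = pr2 X X.
Proof.
  intros Hzero.
  set (fst_twice := mkPtHom pt_pair pt_pair (pair (pr1 X X) (pr1 X X))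
                      ltac:(pt_hom) ltac:(pt_hom)).
  assert (Hid := f_equal (@proj1_sig _ _)
                   (zero_obj_endo_id (Pt E X) pt_pair fst_twice Hzero)); simpl in Hid.
  rewrite <- (comp_id_r _ _ _ (pr2 X X)), <- Hid; prodcat; reflexivity.
Qed.

Section MaltsevOperation.
Variable p : Hom (prod X (prod X X)) X.
Hypothesis Hp : maltsev_structure X p.

Definition triple_maltsev : PtHom E X pt_triple pt_pair.
Proof.
  refine (mkPtHom pt_triple pt_pair
    (pair (pr1 _ _) (p ∘ pair (pr1 _ _ ∘ pr2 _ _) (pair (pr1 _ _) (pr2 _ _ ∘ pr2 _ _))))
    _ _); pt_hom.
  rewrite (proj1 (Hp _ _ _)); reflexivity.
Defined.

Lemma pt_pair_self_commute : commute (C := Pt E X) (idm (c := Pt E X) pt_pair) (idm (c := Pt E X) pt_pair).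
Proof.
  exists pt_triple, triple_pr1, triple_pr2, triple_in1, triple_in2, triple_maltsev.
  split; [exact triple_is_product|].
  split; [exact triple_is_inj1|].
  split; [exact triple_is_inj2|].
  split; apply PtHom_eq; simpl; prodcat.
  - rewrite (proj1 (Hp _ _ _)); apply prod_ext; prodcat; reflexivity.
  - rewrite (proj2 (Hp _ _ _)); apply prod_ext; prodcat; reflexivity.
Qed.

End MaltsevOperation.
End PointsOver.

Lemma maltsev_structure_bang_mono (E : ProdCat) (X : Ob E) (p : Hom (prod X (prod X X)) X) :
  (forall Y : Ob E, stiffly_unital (Pt E Y)) -> maltsev_structure X p -> is_mono (bang X).
Proof.
  intros Hstiff Hp.
  apply bang_mono_of_pr1_eq_pr2, pt_pair_zero_pr1_eq_pr2,
    stiffly_unital_self_commute_zero; [apply Hstiff|].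
  exact (pt_pair_self_commute E X p Hp).
Qed.

(* p(x, y, z) = (x y⁻¹) z *)
Lemma group_maltsev_structure (E : ProdCat) (X : Ob E)
    (m : Hom (prod X X) X) (e : Hom one X) (i : Hom X X) :
  group_structure X m e i ->
  maltsev_structure X
    (m ∘ pair (m ∘ pair (pr1 X (prod X X)) (i ∘ (pr1 X X ∘ pr2 X (prod X X))))
              (pr2 X X ∘ pr2 X (prod X X))).
Proof.
  intros Hg T x y; prodcat; split.
  - destruct (Hg T x (i ∘ y) y) as [-> _].
    destruct (Hg T y y y) as (_ & _ & _ & -> & _).
    exact (proj1 (proj2 (proj2 (Hg T x x x)))).
  - destruct (Hg T y y y) as (_ & _ & _ & _ & ->).
    exact (proj1 (proj2 (Hg T x x x))).
Qed.

Theorem mainTheorem5 (E : ProdCat) (HE : stiffly_Maltsev E) :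
  (forall (X : Ob E) (p : Hom (prod X (prod X X)) X),
      maltsev_structure X p -> is_mono (bang X)) /\
  (forall (X : Ob E) (m : Hom (prod X X) X) (e : Hom one X) (i : Hom X X),
      group_structure X m e i -> is_iso (bang X)).
Proof.
  destruct HE as [_ Hstiff]; split.
  - intros X p Hp; exact (maltsev_structure_bang_mono E X p Hstiff Hp).
  - intros X m e i Hg.
    apply (bang_iso_of_mono E X e).
    exact (maltsev_structure_bang_mono E X _ Hstiff (group_maltsev_structure E X m e i Hg)).
Qed.
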